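(* Let $M_1,\dots,M_s$ be complex $4\times 4$ matrices each of rank exactly $2$. Then there exists an open dense subset $\Delta\subset L\times L$, where $L$ is the space of real $4\times 4$ matrices, such that for every $(L_1,L_2)\in\Delta$ and every $1\le i\le s$, the leading principal minor of order $2$ of $L_1 M_i L_2$ (the determinant of its upper-left $2\times 2$ submatrix) is nonzero. *)

From HB Require Import structures.
From mathcomp Require Import all_boot all_order all_algebra.
From mathcomp Require Import all_classical all_reals all_analysis.
From mathcomp Require Import matrix_topology matrix_normedtype.
From mathcomp Require Import complex.
Import numFieldNormedType.Exports.
Set Implicit Arguments. Unset Strict Implicit. Unset Printing Implicit Defensive.
Import Order.TTheory GRing.Theory Num.Theory.
Local Open Scope ring_scope.

Definition lead2 (F : Type) (A : 'M[F]_4) : 'M[F]_2 :=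
  \matrix_(i < 2, j < 2) A (widen_ord (isT : 2 <= 4)%N i) (widen_ord (isT : 2 <= 4)%N j).

Definition lead_minor2 (F : comNzRingType) (A : 'M[F]_4) : F := \det (lead2 A).

Definition cplx_mx (R : rcfType) (A : 'M[R]_4) : 'M[R[i]]_4 :=
  map_mx (fun x : R => x%:C%C) A.

From HB Require Import structures.
From mathcomp Require Import all_boot all_order all_algebra.
From mathcomp Require Import all_classical all_reals all_analysis.
From mathcomp Require Import matrix_topology matrix_normedtype.
From mathcomp Require Import complex.
Import numFieldNormedType.Exports.
Import Order.TTheory GRing.Theory Num.Theory.
Local Open Scope ring_scope.
Local Open Scope classical_set_scope.
Set Implicit Arguments. Unset Strict Implicit. Unset Printing Implicit Defensive.

(* For each k the set of pairs (L1, L2) with a nonzero minor is open, the minor being a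
   polynomial, hence continuous, function of the entries.  It is dense: since M_k has rank 2
   it has a nonsingular 2x2 submatrix, and selection matrices P, Q bring it to the upper-left
   corner, so the minor is nonzero at (P, Q).  Along the segment from any (A, B) to (P, Q) the
   minor is then a nonzero polynomial in the parameter t, so it is nonzero for arbitrarily
   small t > 0.  Delta is the finite intersection of these open dense sets. *)

Section ContinuousAlgebra.
Variables (T : topologicalType) (K : numFieldType).

Lemma continuous_sum (I : Type) (r : seq I) (P : pred I) (F : I -> T -> K) :
  (forall i, continuous (F i)) -> continuous (fun x => \sum_(i <- r | P i) F i x).
Proof.
move=> cF; elim: r => [|i r IHr].
  by under eq_fun do rewrite big_nil; exact: cst_continuous.
under eq_fun do rewrite big_cons.
by case: (P i) => // x; apply: continuousD; [exact: cF | exact: IHr].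
Qed.

Lemma continuous_prod (I : Type) (r : seq I) (P : pred I) (F : I -> T -> K) :
  (forall i, continuous (F i)) -> continuous (fun x => \prod_(i <- r | P i) F i x).
Proof.
move=> cF; elim: r => [|i r IHr].
  by under eq_fun do rewrite big_nil; exact: cst_continuous.
under eq_fun do rewrite big_cons.
by case: (P i) => // x; apply: continuousM; [exact: cF | exact: IHr].
Qed.

Lemma continuous_mulmx m n p (A : T -> 'M[K]_(m, n)) (B : T -> 'M[K]_(n, p)) :
  (forall i j, continuous (fun x => A x i j)) ->
  (forall i j, continuous (fun x => B x i j)) ->
  forall i j, continuous (fun x => (A x *m B x) i j).
Proof.
move=> cA cB i j; under eq_fun do rewrite mxE.
by apply: continuous_sum => k x; apply: continuousM; [exact: cA | exact: cB].
Qed.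

Lemma continuous_det n (A : T -> 'M[K]_n) :
  (forall i j, continuous (fun x => A x i j)) -> continuous (fun x => \det (A x)).
Proof.
move=> cA; apply: continuous_sum => s x.
apply: (continuousM (s := fun=> _)); first exact: cst_continuous.
by apply: continuous_prod => i; exact: cA.
Qed.

Lemma open_nonzero (f : T -> K) : continuous f -> open [set x | f x != 0].
Proof. by move=> cf; rewrite openE => x /= fx0; exact: cvgr_neq0 (cf x) fx0. Qed.

End ContinuousAlgebra.

Lemma normc_real (R : rcfType) (x : R) : `|x%:C%C| = `|x|%:C%C.
Proof. by rewrite normc_def /= expr0n addr0 sqrtr_sqr. Qed.

(* [R[i]] gets its norm topology only through the alias [R[i]^o]. *)
Lemma real_complex_continuous (R : realType) :
  continuous (fun x : R => x%:C%C : R[i]^o).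
Proof.
move=> x; apply/cvgrPdist_lt => e; rewrite ltcE /= => /andP[/eqP Ime Ree].
near=> t; rewrite -rmorphB normc_real ltcE /= Ime eqxx /=.
near: t; exact: (@cvgr_dist_lt _ R^o _ (nbhs x) _ id x cvg_id _ Ree).
Unshelve. all: by end_near. Qed.

Lemma open_dense_bigcap (T : topologicalType) (I : finType) (A : I -> set T) :
  (forall i, open (A i)) -> (forall i, dense (A i)) ->
  open (\bigcap_i A i) /\ dense (\bigcap_i A i).
Proof.
move=> oA dA.
suff cap_seq (r : seq I) : open [set x | forall i, i \in r -> A i x] /\
                 dense [set x | forall i, i \in r -> A i x].
  have -> : \bigcap_i A i = [set x | forall i, i \in enum I -> A i x].
    by apply/seteqP; split => x Ax i _; apply: Ax; rewrite ?mem_enum.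
  exact: cap_seq.
elim: r => [|i r [oAr dAr]].
  have -> : [set x | forall i, i \in [::] -> A i x] = setT by apply/seteqP; split.
  by split; [exact: openT | move=> O [x Ox] _; exists x].
have -> : [set x | forall j, j \in i :: r -> A j x] =
          A i `&` [set x | forall j, j \in r -> A j x].
  apply/seteqP; split => x /=.
    by move=> Ax; split=> [|j jr]; apply: Ax; rewrite inE ?eqxx ?jr ?orbT.
  by move=> [Aix Arx] j; rewrite inE => /predU1P[->|/Arx].
by split; [exact: openI | exact: denseI].
Qed.

Lemma exists_nonroot_near0 (R : realFieldType) (K : idomainType) (f : R -> K)
    (p : {poly K}) (e : R) :
  injective f -> p != 0 -> 0 < e -> exists2 t, 0 < t < e & ~~ root p (f t).
Proof.
move=> f_inj p0 e0.
pose t n : R := e / n.+2%:R.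
have t_inj : injective t.
  by move=> m n /(mulfI (lt0r_neq0 e0))/invr_inj/eqP; rewrite eqr_nat => /eqP[].
have uniq_ft : uniq [seq f (t n) | n <- iota 0 (size p)].
  by rewrite map_inj_uniq ?iota_uniq // => m n /f_inj/t_inj.
have /allPn[_ /mapP[n _ ->] pn0] :
    ~~ all (root p) [seq f (t n) | n <- iota 0 (size p)].
  apply/negP => roots_p.
  by have := max_poly_roots p0 roots_p uniq_ft; rewrite size_map size_iota ltnn.
exists (t n) => //.
by rewrite divr_gt0 ?ltr0n //= ltr_pdivrMr ?ltr0n // ltr_pMr // ltr1n.
Qed.

Lemma dense_of_nonroot_paths (R : realType) (T : topologicalType) (K : idomainType)
    (f : R -> K) (S : set T) :
  injective f ->
  (forall x : T, exists (g : R -> T) (p : {poly K}),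
      [/\ g t @[t --> (0 : R)] --> x, p != 0 & forall t, ~~ root p (f t) -> S (g t)]) ->
  dense S.
Proof.
move=> f_inj paths O [x Ox] oO.
have [g [p [gx p0 Sg]]] := paths x.
have /nbhs_ballP[e /= e0 ball_e] := gx _ (open_nbhs_nbhs (conj oO Ox)).
have [t /andP[t0 te] pt] := exists_nonroot_near0 f_inj p0 e0.
exists (g t); split; last exact: Sg.
by apply: ball_e; rewrite /ball /= sub0r normrN gtr0_norm.
Qed.

Lemma lead2_map_mx (aT rT : Type) (h : aT -> rT) (A : 'M[aT]_4) :
  map_mx h (lead2 A) = lead2 (map_mx h A).
Proof. by apply/matrixP => i j; rewrite !mxE. Qed.

Section Pencil.
Variable K : comNzRingType.

Definition mx_pencil m n (A D : 'M[K]_(m, n)) : 'M[{poly K}]_(m, n) :=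
  map_mx polyC A + 'X *: map_mx polyC D.

Lemma horner_mx_pencil m n (A D : 'M[K]_(m, n)) (z : K) :
  map_mx (horner_eval z) (mx_pencil A D) = A + z *: D.
Proof. by apply/matrixP => i j; rewrite !mxE /horner_eval !hornerE mulrC. Qed.

Definition minor_pencil (A D1 M B D2 : 'M[K]_4) : {poly K} :=
  lead_minor2 (mx_pencil A D1 *m map_mx polyC M *m mx_pencil B D2).

Lemma minor_pencilE (A D1 M B D2 : 'M[K]_4) (z : K) :
  (minor_pencil A D1 M B D2).[z] = lead_minor2 ((A + z *: D1) *m M *m (B + z *: D2)).
Proof.
rewrite /minor_pencil /lead_minor2 -horner_evalE -det_map_mx lead2_map_mx !map_mxM.
rewrite !horner_mx_pencil; congr (\det (lead2 (_ *m _ *m _))).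
by apply/matrixP => i j; rewrite !mxE; exact: hornerC.
Qed.

End Pencil.

Section Selection.
Variable K : nzRingType.

Definition select_rows (f : 'I_2 -> 'I_4) : 'M[K]_4 :=
  \matrix_(i, j) ((i < 2)%N && (j == f (inord i)))%:R.

Definition select_cols (g : 'I_2 -> 'I_4) : 'M[K]_4 :=
  \matrix_(i, j) ((j < 2)%N && (i == g (inord j)))%:R.

Lemma lead2_select (f g : 'I_2 -> 'I_4) (A : 'M[K]_4) :
  lead2 (select_rows f *m A *m select_cols g) = mxsub f g A.
Proof.
have inord_widen (i : 'I_2) : inord (widen_ord (isT : (2 <= 4)%N) i) = i.
  by apply/val_inj; rewrite /= inordK // ltn_ord.
apply/matrixP => i j; rewrite !mxE (bigD1 (g j)) //= big1 => [|k /negbTE kg].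
  rewrite !mxE /= ltn_ord inord_widen eqxx mulr1 addr0.
  rewrite (bigD1 (f i)) //= big1 => [|k /negbTE kf].
    by rewrite !mxE /= ltn_ord inord_widen eqxx mul1r addr0.
  by rewrite !mxE /= ltn_ord inord_widen kf mul0r.
by rewrite !mxE /= ltn_ord inord_widen kg mulr0.
Qed.

End Selection.

Lemma map_select_rows (aR rR : nzRingType) (h : {rmorphism aR -> rR}) f :
  map_mx h (select_rows aR f) = select_rows rR f.
Proof. by apply/matrixP => i j; rewrite !mxE rmorph_nat. Qed.

Lemma map_select_cols (aR rR : nzRingType) (h : {rmorphism aR -> rR}) g :
  map_mx h (select_cols aR g) = select_cols rR g.
Proof. by apply/matrixP => i j; rewrite !mxE rmorph_nat. Qed.

Lemma row_free_colsub_unit (F : fieldType) r n (N : 'M[F]_(r, n)) :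
  row_free N -> exists g : 'I_r -> 'I_n, colsub g N \in unitmx.
Proof.
move=> /eqP rkN; have rkNt : \rank N^T = r by rewrite mxrank_tr.
move: (maxrankfun N^T) (maxrowsub_free N^T); rewrite rkNt => g rfg.
exists g; rewrite -unitmx_tr -row_free_unit.
by rewrite (_ : (colsub g N)^T = rowsub g N^T) //; apply/matrixP => i j; rewrite !mxE.
Qed.

Lemma rank_minor_neq0 (F : fieldType) m n r (M : 'M[F]_(m, n)) :
  \rank M = r -> exists (f : 'I_r -> 'I_m) (g : 'I_r -> 'I_n), \det (mxsub f g M) != 0.
Proof.
move=> <-; have [g unit_g] := row_free_colsub_unit (maxrowsub_free M).
exists (maxrankfun M), g; rewrite -unitfE -unitmxE.
rewrite (_ : mxsub _ _ M = colsub g (rowsub (maxrankfun M) M)) //.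
by apply/matrixP => i j; rewrite !mxE.
Qed.

Lemma cvg_line (R : realType) (V : normedModType R) (A D : V) :
  A + t *: D @[t --> (0 : R)] --> A.
Proof.
have : A + t *: D @[t --> (0 : R)] --> A + 0 *: D.
  by apply: cvgD; [exact: cvg_cst | apply: cvgZl; exact: cvg_id].
by rewrite scale0r addr0.
Qed.

Section ComplexMinor.
Variable R : realType.

Definition nonzero_minor_set (M : 'M[R[i]]_4) : set ('M[R]_4 * 'M[R]_4) :=
  [set L | lead_minor2 (cplx_mx L.1 *m M *m cplx_mx L.2) != 0].

Lemma cplx_mx_line (A D : 'M[R]_4) (t : R) :
  cplx_mx (A + t *: D) = cplx_mx A + t%:C%C *: cplx_mx D.
Proof. by rewrite /cplx_mx map_mxD map_mxZ. Qed.

Lemma continuous_cplx_entry (h : 'M[R]_4 * 'M[R]_4 -> 'M[R]_4) i j :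
  continuous h -> continuous (fun L => cplx_mx (h L) i j : R[i]^o).
Proof.
move=> ch L; under eq_fun do rewrite mxE.
have chij : {for L, continuous (fun L => h L i j)}.
  exact: continuous_comp (ch L) (@coord_continuous _ _ _ i j (h L)).
by apply: continuous_comp chij _; exact: real_complex_continuous.
Qed.

Lemma open_nonzero_minor_set (M : 'M[R[i]]_4) : open (nonzero_minor_set M).
Proof.
apply: (open_nonzero (K := R[i])); apply: continuous_det => i j.
under eq_fun do rewrite mxE.
apply: continuous_mulmx => {}i {}j.
  apply: continuous_mulmx => {}i {}j; last exact: cst_continuous.
  by apply: continuous_cplx_entry => L; exact: cvg_fst.
by apply: continuous_cplx_entry => L; exact: cvg_snd.
Qed.

Lemma exists_nonzero_minor (M : 'M[R[i]]_4) : \rank M = 2%N ->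
  exists P Q : 'M[R]_4, lead_minor2 (cplx_mx P *m M *m cplx_mx Q) != 0.
Proof.
move=> /rank_minor_neq0[f [g minor_fg]].
exists (select_rows R f), (select_cols R g).
by rewrite /cplx_mx map_select_rows map_select_cols /lead_minor2 lead2_select.
Qed.

Lemma dense_nonzero_minor_set (M : 'M[R[i]]_4) : \rank M = 2%N ->
  dense (nonzero_minor_set M).
Proof.
move=> /exists_nonzero_minor[P [Q minorPQ]].
apply: (dense_of_nonroot_paths (f := real_complex R)); first exact: complexI.
move=> [A B].
pose p := minor_pencil (cplx_mx A) (cplx_mx (P - A)) M (cplx_mx B) (cplx_mx (Q - B)).
have pE t : p.[t%:C%C] =
    lead_minor2 (cplx_mx (A + t *: (P - A)) *m M *m cplx_mx (B + t *: (Q - B))).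
  by rewrite minor_pencilE !cplx_mx_line.
exists (fun t => (A + t *: (P - A), B + t *: (Q - B))), p; split.
- by apply: (@cvg_pair _ _ _ (nbhs (0 : R)) (nbhs A) (nbhs B)); exact: cvg_line.
- apply: contraNneq minorPQ => p0.
  by have := pE 1; rewrite p0 horner0 !scale1r !subrKC => <-.
- by move=> t; rewrite /root pE.
Qed.

End ComplexMinor.

Theorem lemma4p1 (R : realType) (s : nat) (M : 'I_s -> 'M[R[i]]_4)
  (hM : forall k : 'I_s, \rank (M k) = 2%N) :
  exists Delta : set ('M[R]_4 * 'M[R]_4),
    open Delta /\ dense Delta /\
    forall L1 L2 : 'M[R]_4, Delta (L1, L2) ->
      forall k : 'I_s, lead_minor2 (cplx_mx L1 *m M k *m cplx_mx L2) != 0.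
Proof.
pose Delta := \bigcap_k nonzero_minor_set (M k).
have [open_Delta dense_Delta] : open Delta /\ dense Delta.
  apply: open_dense_bigcap => k.
    exact: open_nonzero_minor_set.
  exact: dense_nonzero_minor_set.
by exists Delta; split; [|split] => // L1 L2 minors k; exact: minors.
Qed.
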